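(* Let $\alpha,n\in\mathbb{Q}$ with $n\neq0$. The torsion subgroup of $E_{\alpha,-n^2}(\mathbb{Q})$, where $$E_{\alpha,-n^2}:\ y^2=x^3+\alpha x^2-n^2x,$$ is not isomorphic to $\mathbb{Z}/2\mathbb{Z}\times\mathbb{Z}/8\mathbb{Z}$. *)

From mathcomp Require Import all_boot all_order all_algebra.
Set Implicit Arguments. Unset Strict Implicit. Unset Printing Implicit Defensive.
Import Order.TTheory GRing.Theory Num.Theory.
Local Open Scope ring_scope.

(* Rational points of y^2 = x^3 + a x^2 + b x, projective closure:
   None = point at infinity O, Some (x, y) = affine point. *)
Definition ec_point := option (rat * rat).

Definition on_curve (a b : rat) (P : ec_point) : bool :=
  match P with
  | None => true
  | Some (x, y) => y ^+ 2 == x ^+ 3 + a * x ^+ 2 + b * x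
  end.

Definition ec_add (a b : rat) (P Q : ec_point) : ec_point :=
  match P, Q with
  | None, _ => Q
  | _, None => P
  | Some (x1, y1), Some (x2, y2) =>
      if (x1 == x2) && (y1 + y2 == 0) then None
      else
        let l := if x1 == x2
                 then (3 * x1 ^+ 2 + 2 * a * x1 + b) / (2 * y1)
                 else (y2 - y1) / (x2 - x1) in
        let x3 := l ^+ 2 - a - x1 - x2 in
        Some (x3, - (l * (x3 - x1) + y1))
  end.

Definition ec_mul (a b : rat) (k : nat) (P : ec_point) : ec_point :=
  iter k (ec_add a b P) None.

Definition is_torsion (a b : rat) (P : ec_point) : Prop :=
  on_curve a b P /\ exists k : nat, (0 < k)%N /\ ec_mul a b k P = None.

Definition torsion_iso_Z2xZ8 (a b : rat) : Prop :=
  exists f : 'Z_2 * 'Z_8 -> ec_point,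
    injective f /\
    (forall u, is_torsion a b (f u)) /\
    (forall P, is_torsion a b P -> exists u, f u = P) /\
    (forall u v, f (u + v) = ec_add a b (f u) (f v)).

From mathcomp Require Import all_boot all_order all_algebra.
From mathcomp Require Import zify ring lra.
Set Implicit Arguments. Unset Strict Implicit.
Import GRing.Theory Num.Theory.

(* Let Q be a point of order 8 on E : y^2 = x^3 + a x^2 + b x with b = -n^2,
   P = 2Q and T = 2P = (e, 0).  Since b < 0, the point (0, 0) is not a double
   (x(2P) = 0 would force x(P)^2 = b), so e <> 0 and the cubic splits as
   x (x - e) (x - e').  Because P = 2Q is itself a double, x(P) - r is a
   rational square for every root r, so x(P) = A^2 and x(P) - e' = C^2, while
   2P = T gives x(P)^2 = e (2 x(P) - e').  These relations combine into
   C^4 = A^4 + Z^2 with A, Z nonzero, which Fermat's descent forbids. *)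

Lemma coprime_mul_sqr_l a b c : coprime a b -> a * b = c ^ 2 -> exists r, a = r ^ 2.
Proof.
move=> cab habc; exists (gcdn a c).
have cc : c * c = a * b by rewrite habc expnS expn1.
apply/eqP; rewrite eqn_dvd; apply/andP; split.
- have -> : gcdn a c ^ 2 = gcdn (gcdn (a * a) (a * c)) (gcdn (c * a) (c * c)).
    by rewrite expnS expn1 muln_gcdl -!muln_gcdr.
  by rewrite [c * a]mulnC !dvdn_gcd cc !dvdn_mulr.
- have aa : gcdn (a * a) (a * b) = a by rewrite -muln_gcdr (eqP cab) muln1.
  rewrite -{2}aa dvdn_gcd -cc expnS expn1.
  by rewrite !dvdn_mul ?dvdn_gcdl ?dvdn_gcdr.
Qed.

Lemma coprime_mul_sqr_r a b c : coprime a b -> a * b = c ^ 2 -> exists r, b = r ^ 2.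
Proof. by move=> cab habc; apply: (@coprime_mul_sqr_l b a c); rewrite 1?coprime_sym // mulnC. Qed.

Lemma coprime_transfer a b m n :
  coprime a b -> gcdn m n %| a -> gcdn m n %| b -> coprime m n.
Proof. by move=> cab ga gb; rewrite /coprime -dvdn1 -(eqP cab) dvdn_gcd ga. Qed.

Lemma odd_form n : odd n -> exists k, n = 2 * k + 1.
Proof. move=> on; exists n./2; have := odd_double_half n; rewrite on -mul2n; lia. Qed.

Lemma even_form n : ~~ odd n -> exists k, n = 2 * k.
Proof. move=> en; exists n./2; have := odd_double_half n; rewrite (negbTE en) -mul2n; lia. Qed.

Lemma sqr_mod4 n : n ^ 2 %% 4 = odd n.
Proof.
rewrite -{1}(odd_double_half n) -mul2n.
case: (odd n) => /=.
- have -> : (1 + 2 * n./2) ^ 2 = (n./2 + n./2 * n./2) * 4 + 1 by ring.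
  by rewrite modnMDl.
- have -> : (0 + 2 * n./2) ^ 2 = (n./2 * n./2) * 4 + 0 by ring.
  by rewrite modnMDl.
Qed.

Lemma pythagorean_param X U V : X ^ 2 = U ^ 2 + V ^ 2 -> coprime X V -> ~~ odd U -> odd V ->
  exists p q, [/\ X = p ^ 2 + q ^ 2, V + q ^ 2 = p ^ 2, U = 2 * p * q & coprime p q].
Proof.
move=> h cXV eU oV.
have oX : odd X by move: (congr1 odd h); rewrite oddD !oddX /= (negbTE eU) oV.
have VX : V <= X by rewrite -leq_sqr h leq_addl.
have [i Hi] := odd_form oX; have [j Hj] := odd_form oV; have [k Hk] := even_form eU.
(* (X + V) / 2 and (X - V) / 2 are coprime with product (U / 2)^2. *)
set A := i + j + 1; set B := i - j.
have XA : X = A + B by rewrite /A /B; lia.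
have VA : V = A - B by rewrite /A /B; lia.
have AB : A * B = k ^ 2 by move: h; rewrite XA Hk VA; nia.
have cAB : coprime A B.
  apply: coprime_transfer cXV _ _.
    by rewrite XA dvdn_add ?dvdn_gcdl ?dvdn_gcdr.
  by rewrite VA dvdn_sub ?dvdn_gcdl ?dvdn_gcdr.
have [p Hp] := coprime_mul_sqr_l cAB AB; have [q Hq] := coprime_mul_sqr_r cAB AB.
exists p, q; split.
- by rewrite XA Hp Hq.
- by rewrite -Hq -Hp VA; lia.
- apply: (@expIn 2) => //.
  by rewrite Hk !expnMn -AB Hp Hq mulnA.
- by move: cAB; rewrite Hp Hq coprime_pexpl // coprime_pexpr.
Qed.

Definition quartic_sol (x y z : nat) : Prop :=
  [/\ 0 < x, 0 < y, 0 < z & x ^ 4 = y ^ 4 + z ^ 2].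

(* Dividing out gcd(x, y) yields a primitive solution with no larger x. *)
Lemma quartic_reduce x y z : quartic_sol x y z ->
  exists x' y' z', [/\ x' <= x, coprime x' y' & quartic_sol x' y' z'].
Proof.
case=> x0 y0 z0 h.
have g0 : 0 < gcdn x y by rewrite gcdn_gt0 x0.
set g := gcdn x y in g0.
have Hx : x = x %/ g * g by rewrite divnK // dvdn_gcdl.
have Hy : y = y %/ g * g by rewrite divnK // dvdn_gcdr.
have gz : g ^ 2 %| z.
  rewrite -(@dvdn_pexp2r _ _ 2) // -expnM /=.
  have -> : z ^ 2 = x ^ 4 - y ^ 4 by lia.
  by rewrite dvdn_sub // dvdn_exp2r // ?dvdn_gcdl ?dvdn_gcdr.
have Hz : z = z %/ g ^ 2 * g ^ 2 by rewrite divnK.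
exists (x %/ g), (y %/ g), (z %/ g ^ 2); split.
- by rewrite {2}Hx leq_pmulr.
- have : gcdn (x %/ g) (y %/ g) * g == 1 * g by rewrite muln_gcdl -Hx -Hy mul1n.
  by rewrite eqn_pmul2r.
- split.
  + by move: x0; rewrite {1}Hx muln_gt0 => /andP[].
  + by move: y0; rewrite {1}Hy muln_gt0 => /andP[].
  + by move: z0; rewrite {1}Hz muln_gt0 => /andP[].
  + apply/eqP; rewrite -(@eqn_pmul2r (g ^ 4)) ?expn_gt0 ?g0 //.
    have e : (z %/ g ^ 2) ^ 2 * g ^ 4 = (z %/ g ^ 2 * g ^ 2) ^ 2 by rewrite expnMn -expnM.
    by rewrite mulnDl e -!expnMn -Hx -Hy -Hz h.
Qed.

(* In a primitive solution x is odd: otherwise y, z are odd and the equation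
   fails modulo 4. *)
Lemma quartic_odd x y z : coprime x y -> x ^ 4 = y ^ 4 + z ^ 2 -> odd x.
Proof.
move=> cxy h; apply/negPn/negP => ex.
have oy : odd y by rewrite -coprime2n (coprime_dvdl _ cxy) // dvdn2.
move: (congr1 (modn^~ 4) h) => /=.
have sq4 m : m ^ 4 = (m ^ 2) ^ 2 by rewrite -expnM.
rewrite -modnDm !sq4 !sqr_mod4 !oddX /= (negbTE ex) oy.
by case: (odd z).
Qed.

(* Descent when y is odd: (x^2)^2 = z^2 + (y^2)^2 is a primitive triple, whose
   parameters p, q satisfy p^4 - q^4 = (x y)^2 with p < x. *)
Lemma quartic_descent_y_odd x y z : quartic_sol x y z -> coprime x y -> odd y ->
  exists x' y' z', x' < x /\ quartic_sol x' y' z'.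
Proof.
move=> [x0 y0 z0 h] cxy oy.
have ez : ~~ odd z.
  by move: (congr1 odd h); rewrite oddD !oddX /= (quartic_odd cxy h) oy; case: (odd z).
have h2 : (x ^ 2) ^ 2 = z ^ 2 + (y ^ 2) ^ 2 by rewrite -!expnM addnC.
have c2 : coprime (x ^ 2) (y ^ 2) by rewrite coprime_pexpl // coprime_pexpr.
have oy2 : odd (y ^ 2) by rewrite oddX oy orbT.
have [p [q [Hx Hy Hz _]]] := pythagorean_param h2 c2 ez oy2.
have p0 : 0 < p by move: z0; rewrite Hz !muln_gt0 => /andP[/andP[]].
have q0 : 0 < q by move: z0; rewrite Hz !muln_gt0 => /andP[].
exists p, q, (x * y); split; last split => //.
- by rewrite -ltn_sqr Hx -{1}[p ^ 2]addn0 ltn_add2l expn_gt0 q0.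
- by rewrite muln_gt0 x0.
- by rewrite -[4]/(2 * 2) !expnM expnMn Hx -Hy; ring.
Qed.

(* Second descent step: if x^2 = E^2 + O^2 is primitive with E even and
   y^2 = 2 E O, then writing E = 2pq, O = p^2 - q^2 the numbers p, q, O are
   pairwise coprime with square product, so p = P^2, q = Q^2, O = t^2 and
   P^4 = Q^4 + t^2 with P < x. *)
Lemma descent_double_product x y E O :
  x ^ 2 = E ^ 2 + O ^ 2 -> coprime E O -> ~~ odd E -> odd O -> y ^ 2 = 2 * E * O ->
  0 < E -> 0 < O -> exists x' y' z', x' < x /\ quartic_sol x' y' z'.
Proof.
move=> hx cEO eE oO hy E0 O0.
have cxO : coprime x O.
  apply: (coprime_transfer (coprimeXl 2 cEO)); last exact: dvdn_gcdr.
  have gx := dvdn_exp (k := 2) isT (dvdn_gcdl x O); have gO := dvdn_exp (k := 2) isT (dvdn_gcdr x O).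
  by move: gx; rewrite hx dvdn_addl.
have [p [q [Hx HO HE cpq]]] := pythagorean_param hx cxO eE oO.
have p0 : 0 < p by move: E0; rewrite HE !muln_gt0 => /andP[/andP[]].
have q0 : 0 < q by move: E0; rewrite HE !muln_gt0 => /andP[].
have [k Hk] : exists k, y = 2 * k.
  have ey2 : ~~ odd (y ^ 2) by rewrite hy -!mulnA oddM.
  by apply: even_form; rewrite oddX /= in ey2.
have hpqO : p * q * O = k ^ 2 by move: hy; rewrite Hk HE; nia.
have cpO : coprime p O.
  apply: (coprime_transfer (coprimeXr 2 cpq)); first exact: dvdn_gcdl.
  by move: (dvdn_exp (k := 2) isT (dvdn_gcdl p O)); rewrite -HO dvdn_addr // dvdn_gcdr.
have cqO : coprime q O.
  rewrite coprime_sym in cpq.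
  apply: (coprime_transfer (coprimeXr 2 cpq)); first exact: dvdn_gcdl.
  by rewrite -HO dvdn_add ?dvdn_gcdr ?dvdn_exp ?dvdn_gcdl.
have cpqO : coprime (p * q) O by rewrite coprimeMl cpO cqO.
have [s Hs] := coprime_mul_sqr_l cpqO hpqO; have [t Ht] := coprime_mul_sqr_r cpqO hpqO.
have [P HP] := coprime_mul_sqr_l cpq Hs; have [Q HQ] := coprime_mul_sqr_r cpq Hs.
have P0 : 0 < P by move: p0; rewrite HP expn_gt0 orbF.
exists P, Q, t; split; last split => //.
- have Pp : P <= P ^ 2 by rewrite expnS expn1 leq_pmulr.
  have pp : p <= p ^ 2 by rewrite expnS expn1 leq_pmulr.
  have qq : 0 < q ^ 2 by rewrite expn_gt0 q0.
  lia.
- by move: q0; rewrite HQ expn_gt0 orbF.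
- by move: O0; rewrite Ht expn_gt0 orbF.
- by rewrite -[4]/(2 * 2) !expnM -HP -HQ -Ht addnC HO.
Qed.

(* Descent when y is even: (x^2)^2 = (y^2)^2 + z^2 is primitive with
   x^2 = M^2 + N^2 and y^2 = 2 M N, which feeds the second descent step. *)
Lemma quartic_descent_y_even x y z : quartic_sol x y z -> coprime x y -> ~~ odd y ->
  exists x' y' z', x' < x /\ quartic_sol x' y' z'.
Proof.
move=> [x0 y0 z0 h] cxy ey.
have oz : odd z.
  by move: (congr1 odd h); rewrite oddD !oddX /= (quartic_odd cxy h) (negbTE ey); case: (odd z).
have h2 : (x ^ 2) ^ 2 = (y ^ 2) ^ 2 + z ^ 2 by rewrite -!expnM.
have c2 : coprime (x ^ 2) z.
  apply: (coprime_transfer (coprimeXl 2 (coprimeXr 4 cxy))); first exact: dvdn_gcdl.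
  have -> : y ^ 4 = x ^ 4 - z ^ 2 by lia.
  have gx4 : gcdn (x ^ 2) z %| x ^ 4 by rewrite -[4]/(2 * 2) expnM dvdn_exp ?dvdn_gcdl.
  by rewrite dvdn_sub // dvdn_exp ?dvdn_gcdr.
have ey2 : ~~ odd (y ^ 2) by rewrite oddX.
have [M [N [Hx _ Hy cMN]]] := pythagorean_param h2 c2 ey2 oz.
have M0 : 0 < M by move: (expn_gt0 y 2); rewrite y0 Hy !muln_gt0 => /andP[/andP[]].
have N0 : 0 < N by move: (expn_gt0 y 2); rewrite y0 Hy !muln_gt0 => /andP[].
have oMN : odd M (+) odd N by move: (congr1 odd Hx); rewrite oddD !oddX /= (quartic_odd cxy h).
case: (boolP (odd M)) => oM.
- have eN : ~~ odd N by move: oMN; rewrite oM; case: (odd N).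
  apply: (descent_double_product (E := N) (O := M) (y := y)) => //.
  + by rewrite addnC.
  + by rewrite coprime_sym.
  + by rewrite Hy -mulnA [M * N]mulnC mulnA.
- have oN : odd N by move: oMN; rewrite (negbTE oM); case: (odd N).
  exact: (descent_double_product (E := M) (O := N) (y := y)).
Qed.

Lemma quartic_descent x y z : quartic_sol x y z ->
  exists x' y' z', x' < x /\ quartic_sol x' y' z'.
Proof.
move=> sol; have [x1 [y1 [z1 [le_x1 c1 sol1]]]] := quartic_reduce sol.
have [x' [y' [z' [lt_x' sol']]]] : exists x' y' z', x' < x1 /\ quartic_sol x' y' z'.
  case: (boolP (odd y1)) => par_y1.
  - exact: quartic_descent_y_odd sol1 c1 par_y1.
  - exact: quartic_descent_y_even sol1 c1 par_y1.
by exists x', y', z'; split => //; apply: leq_trans le_x1.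
Qed.

Lemma no_quartic_sol x y z : ~ quartic_sol x y z.
Proof.
elim: x {-2}x (leqnn x) y z => [|N IH] x hx y z sol.
  by case: sol; lia.
have [x' [y' [z' [lt_x' sol']]]] := quartic_descent sol.
by apply: (IH x' _ y' z') => //; lia.
Qed.

Local Open Scope ring_scope.

Lemma rat_sqr_nat (r : rat) : exists m d : nat,
  [/\ (0 < d)%N, r ^+ 2 = (m%:R / d%:R) ^+ 2 & (r != 0 -> (0 < m)%N)].
Proof.
exists `|numq r|%N, `|denq r|%N; split.
- by rewrite absz_gt0 denq_neq0.
- rewrite -[LHS]real_normK ?num_real //; congr (_ ^+ 2).
  by rewrite -{1}(divq_num_den r) normf_div !natr_absz -!intr_norm.
- by rewrite absz_gt0 numq_eq0.
Qed.

Lemma no_rat_quartic (A C Z : rat) : A != 0 -> Z != 0 -> C ^+ 4 <> A ^+ 4 + Z ^+ 2.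
Proof.
move=> A_ne0 Z_ne0 H.
have [a [f [f0 HA a0]]] := rat_sqr_nat A.
have [c [e [e0 HC _]]] := rat_sqr_nat C.
have [z [g [g0 HZ z0]]] := rat_sqr_nat Z.
move: H; rewrite -[4%N]/(2 * 2)%N !exprM HA HC HZ => H.
have nf : (f%:R : rat) != 0 by rewrite pnatr_eq0 -lt0n.
have ng : (g%:R : rat) != 0 by rewrite pnatr_eq0 -lt0n.
have Hn : ((c * f * g) ^ 4 = (a * e * g) ^ 4 + (z * e ^ 2 * f ^ 2 * g) ^ 2)%N.
  apply/eqP; rewrite -(eqr_nat rat) !natrD !natrX !natrM ?natrX; apply/eqP.
  have ne : (e%:R : rat) != 0 by rewrite pnatr_eq0 -lt0n.
  transitivity (((c%:R / e%:R : rat) ^+ 2) ^+ 2 * (e%:R * f%:R * g%:R) ^+ 4); first by field.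
  by rewrite H; field; rewrite ng nf.
have y0 : (0 < a * e * g)%N by rewrite !muln_gt0 a0 ?e0 ?g0.
have z0' : (0 < z * e ^ 2 * f ^ 2 * g)%N by rewrite !muln_gt0 z0 ?e0 ?f0 ?g0.
have x0 : (0 < c * f * g)%N.
  have : (0 < (c * f * g) ^ 4)%N by rewrite Hn addn_gt0 expn_gt0 y0.
  by rewrite expn_gt0 orbF.
exact: (@no_quartic_sol (c * f * g) (a * e * g) (z * e ^ 2 * f ^ 2 * g)).
Qed.

(* Doubling on y^2 = x^3 + a x^2 + b x, written with the cubic f(x) and its
   derivative f'(x); double_x x y is the x-coordinate of 2(x, y) when y <> 0. *)
Section Doubling.
Variables a b : rat.

Definition ec_double (P : ec_point) : ec_point := ec_add a b P P.

Definition cubic (x : rat) : rat := x ^+ 3 + a * x ^+ 2 + b * x.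

Definition cubic' (x : rat) : rat := 3 * x ^+ 2 + 2 * a * x + b.

Definition double_x (x y : rat) : rat := (cubic' x / (2 * y)) ^+ 2 - a - x - x.

Lemma cubic_root_quad r : cubic r = 0 -> r != 0 -> r ^+ 2 + a * r + b = 0.
Proof.
move=> hr r_ne0; move/eqP: hr.
rewrite (_ : cubic r = r * (r ^+ 2 + a * r + b)); last by rewrite /cubic; ring.
by rewrite mulf_eq0 (negbTE r_ne0) => /eqP.
Qed.

Lemma cubic_other_root e : cubic e = 0 -> e != 0 ->
  exists e', [/\ a = - (e + e'), b = e * e' & cubic e' = 0].
Proof.
move=> he e_ne0; exists (- a - e).
have hb : b = e * (- a - e) by rewrite -[b]subr0 -(cubic_root_quad he e_ne0); ring.
by split; [ring | exact: hb | rewrite /cubic hb; ring].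
Qed.

Lemma ec_double_fixed P : ec_double P = P -> P = None.
Proof.
case: P => [[x y]|] //=; rewrite /ec_double /= eqxx /=.
case: eqP => [_ //|y_ne0] [] hx hy.
exfalso; apply: y_ne0; move: hy; rewrite hx subrr mulr0 add0r => hy; lra.
Qed.

Lemma ec_double_None x y : ec_double (Some (x, y)) = None <-> y = 0.
Proof.
rewrite /ec_double /= eqxx /=; split; last by move->; rewrite addr0 eqxx.
by case: eqP => // h _; lra.
Qed.

Lemma ec_double_affine x y : y != 0 ->
  exists y', ec_double (Some (x, y)) = Some (double_x x y, y').
Proof.
move=> y_ne0; rewrite /ec_double /= eqxx /=.
have -> : (y + y == 0) = false by apply/negbTE; apply: contra y_ne0 => /eqP h; apply/eqP; lra.
by eexists.
Qed.

Lemma double_x_sub_root x y r : y != 0 -> y ^+ 2 = cubic x -> cubic r = 0 ->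
  (double_x x y - r) * (4 * y ^+ 2) = ((x - r) ^+ 2 - cubic' r) ^+ 2.
Proof.
move=> y_ne0 hy hr.
have -> : (double_x x y - r) * (4 * y ^+ 2) = cubic' x ^+ 2 - 4 * (a + x + x + r) * y ^+ 2.
  by rewrite /double_x; field.
rewrite hy /cubic /cubic'.
have [->|r_ne0] := eqVneq r 0; first by ring.
have -> : b = (r ^+ 2 + a * r + b) - r ^+ 2 - a * r by ring.
by rewrite cubic_root_quad //; ring.
Qed.

Lemma double_x_sqr x y r : y != 0 -> y ^+ 2 = cubic x -> cubic r = 0 ->
  exists A, double_x x y - r = A ^+ 2.
Proof.
move=> y_ne0 hy hr; exists (((x - r) ^+ 2 - cubic' r) / (2 * y)).
by rewrite expr_div_n -(double_x_sub_root y_ne0 hy hr); field.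
Qed.

(* When b < 0 the point (0, 0) is not a double: x(2P) = 0 would give x^2 = b. *)
Lemma double_x_neq0 x y : b < 0 -> y != 0 -> y ^+ 2 = cubic x -> double_x x y != 0.
Proof.
move=> b_lt0 y_ne0 hy; apply/eqP => hx0.
have c0 : cubic 0 = 0 by rewrite /cubic; ring.
have := double_x_sub_root y_ne0 hy c0; rewrite hx0 subr0 mul0r /cubic' => /esym/eqP.
rewrite sqrf_eq0; have := sqr_ge0 x; rewrite expr0n mulr0 !addr0 add0r.
by move=> *; lra.
Qed.

Lemma Z2xZ8_point_of_order_eight : torsion_iso_Z2xZ8 a b ->
  exists Q : ec_point, [/\ on_curve a b Q, on_curve a b (ec_double Q),
    on_curve a b (ec_double (ec_double Q)),
    ec_double (ec_double Q) <> None & ec_double (ec_double (ec_double Q)) = None].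
Proof.
case=> f [f_inj [f_tor [_ f_hom]]].
have f0 : f 0 = None by apply: ec_double_fixed; rewrite /ec_double -f_hom addr0.
pose g : 'Z_2 * 'Z_8 := (0, 1).
exists (f g); rewrite /ec_double -!f_hom; split; try exact: (f_tor _).1.
- by move=> h4; have := f_inj _ _ (etrans h4 (esym f0)).
- by have -> : g + g + (g + g) + (g + g + (g + g)) = 0 by apply/eqP.
Qed.

Lemma order_eight_coordinates Q :
  on_curve a b Q -> on_curve a b (ec_double Q) -> on_curve a b (ec_double (ec_double Q)) ->
  ec_double (ec_double Q) <> None -> ec_double (ec_double (ec_double Q)) = None ->
  exists xp yp e, [/\ yp ^+ 2 = cubic xp, yp != 0, double_x xp yp = e,
    cubic e = 0 & forall r, cubic r = 0 -> exists A, xp - r = A ^+ 2].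
Proof.
case: Q => [[xq yq]|]; last by move=> _ _ _ /(_ erefl).
move=> /eqP cQ.
have [yq0|yq_ne0] := eqVneq yq 0; first by rewrite (ec_double_None xq yq).2.
have [yp ->] := ec_double_affine xq yq_ne0; move=> /eqP cP.
have [yp0|yp_ne0] := eqVneq yp 0; first by rewrite (ec_double_None _ yp).2.
have [yt ->] := ec_double_affine (double_x xq yq) yp_ne0.
move=> /eqP cT _ /ec_double_None yt0; rewrite yt0 expr0n /= in cT.
exists (double_x xq yq), yp, (double_x (double_x xq yq) yp); split => //.
by move=> r hr; apply: double_x_sqr yq_ne0 cQ hr.
Qed.

End Doubling.

Lemma quartic_identity (x e e' m : rat) : x != 0 ->
  x ^+ 2 = e * (2 * x - e') -> e * e' = - m ^+ 2 ->
  (x - e') ^+ 2 = x ^+ 2 + (m * (2 * x - e') / x) ^+ 2.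
Proof.
move=> x_ne0 hx hm.
have x2_ne0 : x ^+ 2 != 0 by rewrite sqrf_eq0.
have -> : (m * (2 * x - e') / x) ^+ 2 = - e' * (2 * x - e').
  apply: (mulIf x2_ne0); rewrite expr_div_n divfK // exprMn -[m ^+ 2]opprK -hm hx.
  by ring.
by ring.
Qed.

Lemma no_halvable_point_of_order_four alpha n xp yp e : n != 0 ->
  yp ^+ 2 = cubic alpha (- n ^+ 2) xp -> yp != 0 ->
  double_x alpha (- n ^+ 2) xp yp = e -> cubic alpha (- n ^+ 2) e = 0 ->
  (forall r, cubic alpha (- n ^+ 2) r = 0 -> exists A, xp - r = A ^+ 2) -> False.
Proof.
set b := - n ^+ 2 => n_ne0 hyp yp_ne0 he ce hsq.
have b_lt0 : b < 0 by rewrite /b oppr_lt0 exprn_even_gt0.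
have e_ne0 : e != 0 by rewrite -he double_x_neq0.
have [e' [halpha hb ce']] := cubic_other_root ce e_ne0.
(* 2P = (e, 0) forces (xp - e)^2 = f'(e) = e (e - e'). *)
have hxp : xp ^+ 2 = e * (2 * xp - e').
  have := double_x_sub_root yp_ne0 hyp ce; rewrite he subrr mul0r => /esym/eqP.
  rewrite sqrf_eq0 => /eqP h; apply/eqP; rewrite -subr_eq0 -h; apply/eqP.
  by rewrite /cubic' halpha hb; ring.
have c0 : cubic alpha b 0 = 0 by rewrite /cubic; ring.
have [A hA] := hsq 0 c0.
have [C hC] := hsq e' ce'.
have xp_ne0 : xp != 0.
  by apply: contra_neq yp_ne0 => xp0; apply/eqP; rewrite -sqrf_eq0 hyp xp0 /cubic; apply/eqP; ring.
have A_ne0 : A != 0 by apply: contra_neq xp_ne0 => A0; rewrite -(subr0 xp) hA A0 expr0n.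
have Z_ne0 : n * (2 * xp - e') / xp != 0.
  rewrite !mulf_neq0 ?invr_eq0 //.
  have xp_gt0 : 0 < xp by rewrite -(subr0 xp) hA exprn_even_gt0.
  have : 0 <= xp - e' by rewrite hC sqr_ge0.
  by move=> ?; apply/eqP; lra.
apply: (no_rat_quartic (C := C) A_ne0 Z_ne0).
rewrite -[4%N]/(2 * 2)%N !exprM -hC -hA subr0.
by apply: quartic_identity xp_ne0 hxp _; rewrite -hb.
Qed.

Theorem proposition7p8 (alpha n : rat) (hn : n != 0) :
  ~ torsion_iso_Z2xZ8 alpha (- (n ^+ 2)).
Proof.
move=> /Z2xZ8_point_of_order_eight [Q [cQ c2Q c4Q Q4_ne0 Q8]].
have [xp [yp [e [hyp yp_ne0 he ce hsq]]]] := order_eight_coordinates cQ c2Q c4Q Q4_ne0 Q8.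
exact: no_halvable_point_of_order_four hn hyp yp_ne0 he ce hsq.
Qed.
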